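(* Let $c_0,p_0$ be constants and let $(H_n)_{n\in\mathbb Z}$, $(G_n)_{n\in\mathbb Z}$ be sequences of differentiable functions of a real variable $\eta$ on a common interval, with $H_n>0$, satisfying for all $n$ \[ -c_0\,H_n+\frac{dH_n}{d\eta}=H_n\bigl(G_{n+1}-G_n\bigr),\qquad p_0-c_0\,G_n+\frac{dG_n}{d\eta}=2\bigl(H_n^2-H_{n-1}^2\bigr). \] Define $r_n(\eta)=2\log\bigl(2H_n(\eta)\bigr)$. Then for all $n$ \[ \frac{d^2 r_n}{d\eta^2}=c_0\Bigl(\frac{dr_n}{d\eta}-2c_0\Bigr)+\bigl(e^{r_{n+1}}-2e^{r_n}+e^{r_{n-1}}\bigr). \]
   Context: In the paper this is stated in the notation $H=H(\eta)$, $\overline H=H(\overline\eta)$, $\underline H=H(\underline\eta)$ along a chain of points $\eta=\nu(n)+\sigma(t)$, $\overline\eta=\nu(n+1)+\sigma(t)$; here $H_n$, $G_n$ denote $H$, $G$ evaluated at the $n$-th point of the chain, viewed as functions of the common shift parameter, and overline/underline correspond to $n\pm1$. *)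

From Stdlib Require Import Reals ZArith.
From Coquelicot Require Import Coquelicot.
Open Scope R_scope.

Definition in_interval (a b : Rbar) (x : R) : Prop :=
  Rbar_lt a (Finite x) /\ Rbar_lt (Finite x) b.

Definition r_of (H : Z -> R -> R) (n : Z) (x : R) : R :=
  2 * ln (2 * H n x).

(* Positivity of [H n] makes [r n] differentiable with [r n' = 2 H n' / H n], which by the first
   equation is [2 (c0 + G (n+1) - G n)]. Differentiating once more and substituting the second
   equation for [G (n+1)'] and [G n'] (where [p0] cancels) leaves
   [2 c0 (G (n+1) - G n) + 4 (H (n+1)^2 - 2 H n^2 + H (n-1)^2)], and [exp (r n) = 4 H n^2]. *)
From Stdlib Require Import Reals ZArith Lra Lia.
From Coquelicot Require Import Coquelicot.
Open Scope R_scope.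

Lemma exp_2ln_double (h : R) : 0 < h -> exp (2 * ln (2 * h)) = 4 * h ^ 2.
Proof.
  intros h_pos.
  replace (2 * ln (2 * h)) with (ln (2 * h) + ln (2 * h)) by ring.
  rewrite exp_plus, exp_ln by lra.
  ring.
Qed.

Lemma is_derive_2ln_double (f : R -> R) (x : R) :
  0 < f x -> ex_derive f x ->
  is_derive (fun y => 2 * ln (2 * f y)) x (2 * Derive f x / f x).
Proof.
  intros f_pos f_der.
  auto_derive.
  - repeat split; [exact f_der | lra].
  - change (Derive (fun y => f y) x) with (Derive f x).
    field; lra.
Qed.

Lemma locally_in_interval (a b : Rbar) (x : R) :
  in_interval a b x -> locally x (in_interval a b).
Proof.
  apply (open_and (fun y : R => Rbar_lt a y) (fun y : R => Rbar_lt y b)).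
  - apply open_Rbar_gt.
  - apply open_Rbar_lt.
Qed.

Section TodaChain.

Variables (c0 p0 : R) (a b : Rbar) (H G : Z -> R -> R).

Hypothesis H_der : forall n x, in_interval a b x -> ex_derive (H n) x.
Hypothesis G_der : forall n x, in_interval a b x -> ex_derive (G n) x.
Hypothesis H_pos : forall n x, in_interval a b x -> 0 < H n x.
Hypothesis H_eq : forall n x, in_interval a b x ->
  - c0 * H n x + Derive (H n) x = H n x * (G (n + 1)%Z x - G n x).
Hypothesis G_eq : forall n x, in_interval a b x ->
  p0 - c0 * G n x + Derive (G n) x = 2 * (H n x ^ 2 - H (n - 1)%Z x ^ 2).

Lemma Derive_r_of n x : in_interval a b x ->
  Derive (r_of H n) x = 2 * (c0 + G (n + 1)%Z x - G n x).
Proof.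
  intros Hx.
  pose proof (H_pos n x Hx) as H_pos_x.
  rewrite (is_derive_unique (r_of H n) x _ (is_derive_2ln_double (H n) x H_pos_x (H_der n x Hx))).
  pose proof (H_eq n x Hx) as H_eq_x.
  field_simplify_eq; [nra | lra].
Qed.

Lemma is_derive_Derive_r_of n x : in_interval a b x ->
  is_derive (Derive (r_of H n)) x
    (2 * (Derive (G (n + 1)%Z) x - Derive (G n) x)).
Proof.
  intros Hx.
  apply (is_derive_ext_loc (fun y => 2 * (c0 + G (n + 1)%Z y - G n y))).
  - apply (filter_imp (in_interval a b)); [|exact (locally_in_interval a b x Hx)].
    intros y Hy; symmetry; exact (Derive_r_of n y Hy).
  - auto_derive; [repeat split; apply G_der; exact Hx |].
    change (Derive (fun y => G (n + 1)%Z y) x) with (Derive (G (n + 1)%Z) x).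
    change (Derive (fun y => G n y) x) with (Derive (G n) x).
    ring.
Qed.

Lemma r_of_second_derivative n x : in_interval a b x ->
  is_derive (Derive (r_of H n)) x
    (c0 * (Derive (r_of H n) x - 2 * c0)
     + (exp (r_of H (n + 1)%Z x) - 2 * exp (r_of H n x) + exp (r_of H (n - 1)%Z x))).
Proof.
  intros Hx.
  rewrite Derive_r_of by exact Hx.
  unfold r_of at 2 3 4.
  rewrite !exp_2ln_double by (apply H_pos; exact Hx).
  pose proof (G_eq (n + 1)%Z x Hx) as G_eq_succ.
  replace (n + 1 - 1)%Z with n in G_eq_succ by lia.
  pose proof (G_eq n x Hx) as G_eq_n.
  refine (eq_ind _ (is_derive _ x) (is_derive_Derive_r_of n x Hx) _ _).
  lra.
Qed.

End TodaChain.

Theorem mainTheorem2 (c0 p0 : R) (a b : Rbar) (H G : Z -> R -> R) :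
  Rbar_lt a b ->
  (forall n x, in_interval a b x -> ex_derive (H n) x) ->
  (forall n x, in_interval a b x -> ex_derive (G n) x) ->
  (forall n x, in_interval a b x -> 0 < H n x) ->
  (forall n x, in_interval a b x ->
     - c0 * H n x + Derive (H n) x = H n x * (G (n + 1)%Z x - G n x)) ->
  (forall n x, in_interval a b x ->
     p0 - c0 * G n x + Derive (G n) x = 2 * (H n x ^ 2 - H (n - 1)%Z x ^ 2)) ->
  forall n x, in_interval a b x ->
    is_derive (fun y => Derive (r_of H n) y) x
      (c0 * (Derive (r_of H n) x - 2 * c0)
       + (exp (r_of H (n + 1)%Z x) - 2 * exp (r_of H n x) + exp (r_of H (n - 1)%Z x))).
Proof.
  intros _ H_der G_der H_pos H_eq G_eq.
  exact (r_of_second_derivative c0 p0 a b H G H_der G_der H_pos H_eq G_eq).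
Qed.
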